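(* Let $n \ge 1$ and let $a_1, \dots, a_n$ be positive real numbers with $\sum_{i=1}^n a_i = 1$. Consider vectors $u_{(i,t)}$ indexed by $(i,t) \in [n] \times [3]$ subject to the following constraints: (1) $u_{(i,t)} \cdot u_{(i,t)} = 1$ for all $(i,t)$; (2) $u_{(i,1)} \cdot u_{(i,2)} = 0$ for all $i \in [n]$; (3) $u_{(i,3)} \cdot u_{(i,1)} = u_{(i,3)} \cdot u_{(i,2)} = \frac{1}{\sqrt{2}}$ for all $i \in [n]$; (4) $u_{(i,1)} \cdot u_{(i+1,1)} = u_{(i,2)} \cdot u_{(i+1,2)} = u_{(i,3)} \cdot u_{(i+1,3)} = \cos a_i$ for all $i \in [n]$, where the index $i+1$ is taken modulo $n$ (so $n+1$ means $1$). Then there exists a family of vectors in $\mathbb{R}^3$ satisfying these constraints if and only if there exists a family of vectors in $\mathbb{R}^2$ satisfying these constraints. *)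

From mathcomp Require Import all_boot all_order all_algebra.
From mathcomp Require Import all_classical all_reals all_analysis.
Set Implicit Arguments. Unset Strict Implicit. Unset Printing Implicit Defensive.
Import Order.TTheory GRing.Theory Num.Theory.
Local Open Scope ring_scope.

Definition dotv (R : realType) (d : nat) (u v : 'rV[R]_d) : R :=
  \sum_(k < d) u 0 k * v 0 k.

(* Indices t in [3] = {1,2,3} are represented by 'I_3 = {0,1,2}. *)
Definition t1 : 'I_3 := @Ordinal 3 0 isT.
Definition t2 : 'I_3 := @Ordinal 3 1 isT.
Definition t3 : 'I_3 := @Ordinal 3 2 isT.

(* The constraints (1)-(4) on a family u_(i,t), i in [n] (as 'I_n), t in [3].
   The successor i+1 mod n is [ordS i]. *)
Definition feasible (R : realType) (n : nat) (a : 'I_n -> R) (d : nat)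
    (u : 'I_n -> 'I_3 -> 'rV[R]_d) : Prop :=
  [/\ (forall i t, dotv (u i t) (u i t) = 1),
      (forall i, dotv (u i t1) (u i t2) = 0),
      (forall i, dotv (u i t3) (u i t1) = (Num.sqrt 2)^-1 /\
                 dotv (u i t3) (u i t2) = (Num.sqrt 2)^-1) &
      (forall i, [/\ dotv (u i t1) (u (ordS i) t1) = cos (a i),
                     dotv (u i t2) (u (ordS i) t2) = cos (a i) &
                     dotv (u i t3) (u (ordS i) t3) = cos (a i)])].

From mathcomp Require Import all_boot all_order all_algebra.
From mathcomp Require Import all_classical all_reals all_analysis.
From mathcomp Require Import ring lra.
Set Implicit Arguments. Unset Strict Implicit. Unset Printing Implicit Defensive.
Import Order.TTheory GRing.Theory Num.Theory.
Local Open Scope ring_scope.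

(* Constraints (1)-(3) force u_(i,3) = (u_(i,1) + u_(i,2)) / sqrt 2, and then (4)
   says that the pair (u_(i+1,1), u_(i+1,2)) has the same cosines with
   (u_(i,1), u_(i,2)) and antisymmetric cross terms, as for a rotation.  In R^3,
   Parseval's identity in the orthonormal frame u_(i,1), u_(i,2), u_(i,1) x u_(i,2)
   shows that two such orthonormal pairs span the same plane.  Going around the
   cycle, every u_(i,t) lies in the plane of u_(1,1), u_(1,2), and its coordinates
   there solve the constraints in R^2; conversely a planar solution embeds in R^3. *)

Section DotProduct.
Variable R : realType.

Lemma dotv_mulmx d (u v : 'rV[R]_d) : dotv u v = (u *m v^T) 0 0.
Proof. by rewrite mxE; apply: eq_bigr => k _; rewrite mxE. Qed.

Lemma dotvC d (u v : 'rV[R]_d) : dotv u v = dotv v u.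
Proof. by apply: eq_bigr => k _; rewrite mulrC. Qed.

Lemma dotv0l d (v : 'rV[R]_d) : dotv 0 v = 0.
Proof. by apply: big1 => k _; rewrite mxE mul0r. Qed.

Lemma dotvDl d (u v w : 'rV[R]_d) : dotv (u + v) w = dotv u w + dotv v w.
Proof. by rewrite /dotv -big_split; apply: eq_bigr => k _; rewrite !mxE mulrDl. Qed.

Lemma dotvZl d k (u w : 'rV[R]_d) : dotv (k *: u) w = k * dotv u w.
Proof. by rewrite /dotv mulr_sumr; apply: eq_bigr => j _; rewrite !mxE mulrA. Qed.

Lemma dotvDr d (u v w : 'rV[R]_d) : dotv w (u + v) = dotv w u + dotv w v.
Proof. by rewrite !(dotvC w) dotvDl. Qed.

Lemma dotvZr d k (u w : 'rV[R]_d) : dotv w (k *: u) = k * dotv w u.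
Proof. by rewrite !(dotvC w) dotvZl. Qed.

Lemma dotvv_eq0 d (u : 'rV[R]_d) : dotv u u = 0 -> u = 0.
Proof.
move=> /eqP; rewrite /dotv psumr_eq0 => [/allP u0|k _]; last by rewrite -expr2 sqr_ge0.
apply/rowP => k; rewrite mxE.
by have := u0 k (mem_index_enum _); rewrite -expr2 sqrf_eq0 => /eqP.
Qed.

Lemma dotv_row_mx d1 d2 (u v : 'rV[R]_d1) (x y : 'rV[R]_d2) :
  dotv (row_mx u x) (row_mx v y) = dotv u v + dotv x y.
Proof.
by rewrite /dotv big_split_ord; congr (_ + _); apply: eq_bigr => k _;
  rewrite ?row_mxEl ?row_mxEr.
Qed.

Lemma dotv_scalar_mx (a b : R) : dotv (a%:M : 'rV_1) b%:M = a * b.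
Proof. by rewrite /dotv big_ord1 !mxE. Qed.

Lemma parseval d (f : 'I_d -> 'rV[R]_d) :
  (forall i j, dotv (f i) (f j) = (i == j)%:R) ->
  forall u v, dotv u v = \sum_k dotv u (f k) * dotv v (f k).
Proof.
move=> f_orthonormal u v; pose F := \matrix_i f i.
have coordE w k : (w *m F^T) 0 k = dotv w (f k).
  by rewrite mxE; apply: eq_bigr => j _; rewrite !mxE.
have FtF : F^T *m F = 1%:M.
  apply: mulmx1C; apply/matrixP => i j; rewrite !mxE -f_orthonormal /dotv.
  by apply: eq_bigr => k _; rewrite !mxE.
have -> : dotv u v = dotv (u *m F^T) (v *m F^T).
  by rewrite !dotv_mulmx trmx_mul trmxK mulmxA -(mulmxA u) FtF mulmx1.
by apply: eq_bigr => k _; rewrite !coordE.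
Qed.

Lemma sqr_invsqrt2 : (Num.sqrt 2)^-1 ^+ 2 = 2^-1 :> R.
Proof. by rewrite exprVn sqr_sqrtr. Qed.

Lemma unit_bisectorE d (u1 u2 u3 : 'rV[R]_d) :
  dotv u1 u1 = 1 -> dotv u2 u2 = 1 -> dotv u3 u3 = 1 -> dotv u1 u2 = 0 ->
  dotv u3 u1 = (Num.sqrt 2)^-1 -> dotv u3 u2 = (Num.sqrt 2)^-1 ->
  u3 = (Num.sqrt 2)^-1 *: (u1 + u2).
Proof.
move=> u1_unit u2_unit u3_unit u1_u2_orth u3_u1 u3_u2.
apply/eqP; rewrite -subr_eq0; apply/eqP/dotvv_eq0.
rewrite -scaleN1r !(dotvDl, dotvDr, dotvZl, dotvZr) (dotvC u1 u3) (dotvC u2 u3) (dotvC u2 u1).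
rewrite u1_unit u2_unit u3_unit u1_u2_orth u3_u1 u3_u2.
apply: (@eq_trans _ _ (1 - 2 * (Num.sqrt 2)^-1 ^+ 2)); first ring.
by rewrite sqr_invsqrt2 mulfV ?subrr.
Qed.

End DotProduct.

Section Space3.
Variable R : realType.
Implicit Types u v : 'rV[R]_3.

Lemma sum3 (F : 'I_3 -> R) : \sum_(k < 3) F k = F t1 + F t2 + F t3.
Proof.
by rewrite !big_ord_recr big_ord0 /= add0r; congr (_ + _ + _); congr F; apply/val_inj.
Qed.

Lemma ord3P (k : 'I_3) : [\/ k = t1, k = t2 | k = t3].
Proof.
case: k => [[|[|[|m]]] lt_m3] //.
- by apply: Or31; apply/val_inj.
- by apply: Or32; apply/val_inj.
- by apply: Or33; apply/val_inj.
Qed.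

Definition cross u v : 'rV[R]_3 :=
  \row_j (if j == t1 then u 0 t2 * v 0 t3 - u 0 t3 * v 0 t2
          else if j == t2 then u 0 t3 * v 0 t1 - u 0 t1 * v 0 t3
          else u 0 t1 * v 0 t2 - u 0 t2 * v 0 t1).

Lemma dotv_cross_cross u v :
  dotv (cross u v) (cross u v) = dotv u u * dotv v v - dotv u v ^+ 2.
Proof. by rewrite /dotv !sum3 /cross !mxE /=; ring. Qed.

Lemma dotv_crossl u v : dotv u (cross u v) = 0.
Proof. by rewrite /dotv !sum3 /cross !mxE /=; ring. Qed.

Lemma dotv_crossr u v : dotv v (cross u v) = 0.
Proof. by rewrite /dotv !sum3 /cross !mxE /=; ring. Qed.

Section OrthonormalPair.
Variables u1 u2 : 'rV[R]_3.
Hypotheses (u1_unit : dotv u1 u1 = 1) (u2_unit : dotv u2 u2 = 1)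
  (u1_u2_orth : dotv u1 u2 = 0).

Definition frame (k : 'I_3) : 'rV[R]_3 :=
  if k == t1 then u1 else if k == t2 then u2 else cross u1 u2.

Lemma frame_orthonormal i j : dotv (frame i) (frame j) = (i == j)%:R.
Proof.
have cross_unit : dotv (cross u1 u2) (cross u1 u2) = 1.
  by rewrite dotv_cross_cross u1_unit u2_unit u1_u2_orth expr0n mulr1 subr0.
by case: (ord3P i) => ->; case: (ord3P j) => ->;
  rewrite /frame /= ?u1_unit ?u2_unit ?cross_unit ?u1_u2_orth ?dotv_crossl ?dotv_crossr
    // dotvC ?u1_u2_orth ?dotv_crossl ?dotv_crossr.
Qed.

Lemma parseval3 v v' :
  dotv v v' = dotv v u1 * dotv v' u1 + dotv v u2 * dotv v' u2
            + dotv v (cross u1 u2) * dotv v' (cross u1 u2).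
Proof. by rewrite (parseval frame_orthonormal) sum3. Qed.

Lemma rotated_pair_coplanar v1 v2 :
  dotv v1 v1 = 1 -> dotv v2 v2 = 1 -> dotv v1 v2 = 0 ->
  dotv u1 v1 = dotv u2 v2 -> dotv u2 v1 = - dotv u1 v2 ->
  dotv v1 (cross u1 u2) = 0 /\ dotv v2 (cross u1 u2) = 0.
Proof.
move=> v1_unit v2_unit v1_v2_orth cos_eq sin_eq.
(* x, y are the components of v1, v2 along u1 x u2; Parseval turns the three
   constraints on v1, v2 into x^2 = y^2 and x y = 0. *)
have := parseval3 v1 v2; have := parseval3 v2 v2; have := parseval3 v1 v1.
rewrite v1_unit v2_unit v1_v2_orth ![dotv v1 _]dotvC ![dotv v2 _]dotvC sin_eq cos_eq.
set x := dotv (cross u1 u2) v1; set y := dotv (cross u1 u2) v2.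
move=> ? ? ?.
have xy0 : x * y = 0 by lra.
have xx_yy : x * x = y * y by lra.
have x0 : x = 0.
  have : (x * x) * (x * x) = 0 by rewrite {2}xx_yy mulrACA xy0 mulr0.
  by move/eqP; rewrite !mulf_eq0 !orbb => /eqP.
by split=> //; move: xx_yy; rewrite x0 mulr0 => /esym/eqP; rewrite mulf_eq0 orbb => /eqP.
Qed.

End OrthonormalPair.

End Space3.

Lemma ordS_ind n (n_gt0 : (0 < n)%N) (P : 'I_n -> Prop) :
  P (Ordinal n_gt0) -> (forall i, P i -> P (ordS i)) -> forall i, P i.
Proof.
move=> P0 PS [k lt_kn]; elim: k lt_kn => [|k IHk] lt_kn.
  by rewrite (_ : Ordinal _ = Ordinal n_gt0) //; apply/val_inj.
have lt_kn' : (k < n)%N := ltnW lt_kn.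
rewrite (_ : Ordinal _ = ordS (Ordinal lt_kn')); first exact/PS/IHk.
by apply/val_inj; rewrite /= modn_small.
Qed.

Section Constraints.
Variables (R : realType) (n : nat) (a : 'I_n -> R).

Lemma feasible_map d d' (u : 'I_n -> 'I_3 -> 'rV[R]_d) (f : 'rV[R]_d -> 'rV[R]_d') :
  (forall i t j s, dotv (f (u i t)) (f (u j s)) = dotv (u i t) (u j s)) ->
  feasible a u -> feasible a (fun i t => f (u i t)).
Proof. by move=> f_isometric [? ? ? ?]; split=> *; rewrite ?f_isometric. Qed.

Section Feasible.
Variables (d : nat) (u : 'I_n -> 'I_3 -> 'rV[R]_d).
Hypothesis u_feasible : feasible a u.

Lemma feasible_t3E i : u i t3 = (Num.sqrt 2)^-1 *: (u i t1 + u i t2).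
Proof.
have [unit orth12 orth3 _] := u_feasible; have [orth31 orth32] := orth3 i.
exact: unit_bisectorE (unit i t1) (unit i t2) (unit i t3) (orth12 i) orth31 orth32.
Qed.

Lemma feasible_skew i :
  dotv (u i t2) (u (ordS i) t1) = - dotv (u i t1) (u (ordS i) t2).
Proof.
have [_ _ _ /(_ i) [cos1 cos2 cos3]] := u_feasible.
move: cos3; rewrite !feasible_t3E !(dotvZl, dotvZr, dotvDl, dotvDr) cos1 cos2.
by rewrite -mulrDr mulrA -expr2 sqr_invsqrt2 => cos3; lra.
Qed.

End Feasible.

Section Feasible3.
Variables (n_gt0 : (0 < n)%N) (u : 'I_n -> 'I_3 -> 'rV[R]_3).
Hypothesis u_feasible : feasible a u.

Let e1 := u (Ordinal n_gt0) t1.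
Let e2 := u (Ordinal n_gt0) t2.

Lemma feasible3_coplanar i t : dotv (u i t) (cross e1 e2) = 0.
Proof.
have [unit orth12 _ cos_next] := u_feasible.
have frame_coplanar j : dotv (u j t1) (cross e1 e2) = 0 /\ dotv (u j t2) (cross e1 e2) = 0.
  move: j; apply: (@ordS_ind _ n_gt0) => [|j [ortho1 ortho2]].
    by split; [exact: dotv_crossl | exact: dotv_crossr].
  have [cos1 cos2 _] := cos_next j.
  have [next1 next2] := rotated_pair_coplanar (unit j t1) (unit j t2) (orth12 j)
    (unit (ordS j) t1) (unit (ordS j) t2) (orth12 (ordS j))
    (etrans cos1 (esym cos2)) (feasible_skew u_feasible j).
  by split; rewrite (parseval3 (unit j t1) (unit j t2) (orth12 j)) ?next1 ?next2
    !(dotvC (cross e1 e2)) ortho1 ortho2 mul0r !mulr0 !addr0.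
have [ortho1 ortho2] := frame_coplanar i.
case: (ord3P t) => -> //.
by rewrite (feasible_t3E u_feasible) !(dotvZl, dotvDl) ortho1 ortho2 addr0 mulr0.
Qed.

Lemma feasible3_dotvE i t j s :
  dotv (u i t) (u j s)
  = dotv (u i t) e1 * dotv (u j s) e1 + dotv (u i t) e2 * dotv (u j s) e2.
Proof.
have [unit orth12 _ _] := u_feasible.
rewrite (parseval3 (unit (Ordinal n_gt0) t1) (unit _ t2) (orth12 _)) -/e1 -/e2.
by rewrite !feasible3_coplanar mulr0 addr0.
Qed.

End Feasible3.

End Constraints.

Theorem lemma3p1 (R : realType) (n : nat) (a : 'I_n -> R) :
  (0 < n)%N ->
  (forall i, 0 < a i) ->
  \sum_(i < n) a i = 1 ->
  (exists u : 'I_n -> 'I_3 -> 'rV[R]_3, feasible a u) <->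
  (exists u : 'I_n -> 'I_3 -> 'rV[R]_2, feasible a u).
Proof.
move=> n_gt0 _ _; split=> -[u u_feasible].
  pose e k := u (Ordinal n_gt0) k.
  pose coords x := row_mx (dotv x (e t1))%:M (dotv x (e t2))%:M : 'rV[R]_(1 + 1).
  exists (fun i t => coords (u i t)); apply: (feasible_map (f := coords) _ u_feasible).
  by move=> i t j s; rewrite /coords dotv_row_mx !dotv_scalar_mx (feasible3_dotvE n_gt0 u_feasible).
pose pad (x : 'rV[R]_2) := row_mx x 0 : 'rV[R]_(2 + 1).
exists (fun i t => pad (u i t)); apply: (feasible_map (f := pad) _ u_feasible).
by move=> i t j s; rewrite /pad dotv_row_mx dotv0l addr0.
Qed.
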